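(* Let $d = 3$, $\rho \ge 0$, and let $r^{(1)}, \dots, r^{(\rho)} \in (0,1)^3$ be pairwise incomparable points whose $3\rho$ coordinates are all distinct. Then the number $\gamma$ of generators of their record-setting region equals $2\rho + 1$.
   Context: For $x,y \in \mathbb{R}^3$, $x \prec y$ means $x_j < y_j$ for all $j$, and $x \le y$ means $x_j \le y_j$ for all $j$; points are incomparable if neither is $\le$ the other. The record-setting region of points $r^{(1)},\dots,r^{(\rho)}$ is $S := \{x \in [0,1)^3 : x \not\prec r^{(i)} \text{ for all } i \in [\rho]\}$, and its generators are the minimal elements of $S$ with respect to $\le$. *)

(* points of R^3 over an arbitrary real field R
   (the paper's R is the instance R = real numbers). *)
From HB Require Import structures.
From mathcomp Require Import all_boot all_order all_algebra.
Set Implicit Arguments. Unset Strict Implicit. Unset Printing Implicit Defensive.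
Import Order.TTheory GRing.Theory Num.Theory.
Local Open Scope ring_scope.

Notation pt R := 'rV[R]_3.
Definition crd (R : realFieldType) (x : pt R) (j : 'I_3) : R := x ord0 j.

Definition slt (R : realFieldType) (x y : pt R) : Prop :=
  forall j : 'I_3, crd x j < crd y j.
Definition ple (R : realFieldType) (x y : pt R) : Prop :=
  forall j : 'I_3, crd x j <= crd y j.
Definition incomparable (R : realFieldType) (x y : pt R) : Prop :=
  ~ ple x y /\ ~ ple y x.

Definition in_region (R : realFieldType) (rho : nat) (r : 'I_rho -> pt R)
    (x : pt R) : Prop :=
  (forall j : 'I_3, 0 <= crd x j /\ crd x j < 1) /\
  (forall i : 'I_rho, ~ slt x (r i)).

Definition generator (R : realFieldType) (rho : nat) (r : 'I_rho -> pt R)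
    (x : pt R) : Prop :=
  in_region r x /\ (forall y, in_region r y -> ple y x -> y = x).

(* For a finite list L of points, S(L) is the set of x in [0,1)^3 lying
   strictly below no point of L, and its generators are the minimal elements
   of S(L).  A point x of S(L) is a generator iff no single coordinate of x can
   be lowered inside S(L) (genS_intro, genS_lower); consequently every
   positive coordinate of a generator is a same-axis coordinate of a point of
   L (genS_coord).

   The count is obtained by sweeping in the third coordinate z.  Let p be a
   point below all points of L in z.  The generators of S(p :: L) are exactly
   (genS_cons):
   - the generators of S(L) not strictly below p,
   - the lifts to height z = p_z of the generators of S(L) strictly below p
     (those have z = 0),
   - two corners, one for each horizontal axis u (with v the other one): the
     point (p_u, max {q_v : q in L, q_u > p_u} or 0, 0).
   The new generators are not generators of S(L), since they have a
   coordinate of p, so adding p adds exactly two generators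
   (genS_cons_enum).  Induction along the list sorted by z gives 2 rho + 1
   generators, the base case being the single generator 0 of the unit box. *)

From HB Require Import structures.
From mathcomp Require Import all_boot all_order all_algebra.
From mathcomp Require Import zify.
From Stdlib Require Import Classical.
Import Order.TTheory GRing.Theory Num.Theory.
Local Open Scope ring_scope.
Set Implicit Arguments. Unset Strict Implicit. Unset Printing Implicit Defensive.

Notation i0 := (@Ordinal 3 0 isT).
Notation i1 := (@Ordinal 3 1 isT).
Notation i2 := (@Ordinal 3 2 isT).

Section Region.
Variable R : realFieldType.
Implicit Types (x y g q w : pt R) (L : seq (pt R)).

Lemma ord3_cases (j : 'I_3) : j = i0 \/ j = i1 \/ j = i2.
Proof.
case: j => [[|[|[|m]]] Hm] //; [left | right; left | right; right]; exact: val_inj.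
Qed.

Lemma axes_cover (u v k : 'I_3) : u != v -> u != i2 -> v != i2 ->
  k = u \/ k = v \/ k = i2.
Proof.
by case: (ord3_cases u) (ord3_cases v) (ord3_cases k) =>
  [->|[->|->]] [->|[->|->]] [->|[->|->]]; auto.
Qed.

Definition max_of (I : eqType) (s : seq I) (P : pred I) (F : I -> R) : R :=
  \big[Order.max/0]_(i <- s | P i) F i.

Lemma max_of_attained (I : eqType) (s : seq I) (P : pred I) (F : I -> R) :
  max_of s P F = 0 \/ exists2 i, i \in s & P i /\ max_of s P F = F i.
Proof.
rewrite /max_of big_seq_cond.
elim/big_rec: _ => [|i m /andP[si Pi] IH]; first by left.
rewrite maxEle; case: ifP => // _; by right; exists i.
Qed.

Lemma max_of_ge0 (I : eqType) (s : seq I) (P : pred I) (F : I -> R) :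
  0 <= max_of s P F.
Proof. exact: bigmax_ge_id. Qed.

Lemma max_of_ub (I : eqType) (s : seq I) (P : pred I) (F : I -> R) i :
  i \in s -> P i -> F i <= max_of s P F.
Proof. exact: le_bigmax_seq. Qed.

Lemma pt_eq x y : (forall j, crd x j = crd y j) -> x = y.
Proof. by move=> E; apply/rowP => j; exact: E. Qed.

Definition setc x (j : 'I_3) (t : R) : pt R :=
  \row_k (if k == j then t else crd x k).

Lemma crd_setc x j t k : crd (setc x j t) k = if k == j then t else crd x k.
Proof. by rewrite /crd mxE. Qed.

Lemma crd_setc_eq x j t : crd (setc x j t) j = t.
Proof. by rewrite crd_setc eqxx. Qed.

Lemma crd_setc_ne x j t k : k != j -> crd (setc x j t) k = crd x k.
Proof. by rewrite crd_setc => /negbTE ->. Qed.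

Lemma setcK x j : setc x j (crd x j) = x.
Proof. by apply: pt_eq => k; rewrite crd_setc; case: eqP => [->|]. Qed.

Lemma setc_setc x j s t : setc (setc x j s) j t = setc x j t.
Proof. by apply: pt_eq => k; rewrite !crd_setc; case: eqP. Qed.

Lemma setcC x j k s t : j != k -> setc (setc x j s) k t = setc (setc x k t) j s.
Proof.
move=> njk; apply: pt_eq => l; rewrite !crd_setc.
by case: (eqVneq l j) => [->|//]; rewrite (negbTE njk).
Qed.

Lemma setc_inj x y j t : crd x j = crd y j -> setc x j t = setc y j t -> x = y.
Proof.
move=> Ej E; apply: pt_eq => k; case: (eqVneq k j) => [-> // | nkj].
by rewrite -(crd_setc_ne x t nkj) E crd_setc_ne.
Qed.

Definition sltb x y := [forall j, crd x j < crd y j].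

Lemma sltbP x y : reflect (slt x y) (sltb x y).
Proof. exact: forallP. Qed.

Lemma slt_axes u v x y : u != v -> u != i2 -> v != i2 ->
  slt x y <-> [/\ crd x u < crd y u, crd x v < crd y v & crd x i2 < crd y i2].
Proof.
move=> nuv nu nv; split=> [H|[hu hv h2] j]; first by split; apply: H.
by case: (axes_cover j nuv nu nv) => [->|[->|->]].
Qed.

Lemma ple_setc x j t : t <= crd x j -> ple (setc x j t) x.
Proof. by move=> le_t k; rewrite crd_setc; case: eqP => [->|]. Qed.

Lemma slt_setc_coord x y j t : slt (setc x j t) y -> ~ slt x y -> crd y j <= crd x j.
Proof.
move=> lt_t nxy; rewrite leNgt; apply/negP => xy; apply: nxy => k.
by case: (eqVneq k j) => [-> // | nkj]; have := lt_t k; rewrite crd_setc_ne.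
Qed.

Definition box x := forall j, 0 <= crd x j /\ crd x j < 1.
Definition inS L x := box x /\ forall q, q \in L -> ~ slt x q.
Definition genS L x := inS L x /\ forall y, inS L y -> ple y x -> y = x.

Lemma box_setc x j t : box x -> 0 <= t -> t < 1 -> box (setc x j t).
Proof. by move=> bx t0 t1 k; rewrite crd_setc; case: eqP => _; [split | exact: bx]. Qed.

Lemma inS_up L x y : inS L x -> ple x y -> box y -> inS L y.
Proof.
move=> [_ Sx] le_xy By; split=> // q Lq lt_yq; apply: (Sx q Lq) => j.
exact: le_lt_trans (le_xy j) (lt_yq j).
Qed.

Lemma genS_intro L x : inS L x ->
  (forall j t, 0 <= t -> t < crd x j -> ~ inS L (setc x j t)) -> genS L x.
Proof.
move=> Sx low; split=> // y Sy le_yx; apply: pt_eq => j.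
have := le_yx j; rewrite le_eqVlt => /orP[/eqP // | lt_j].
case: (low j (crd y j)) => //; first by case: (Sy.1 j).
apply: (inS_up Sy); first by move=> k; rewrite crd_setc; case: eqP => [-> //|].
by apply: box_setc; [exact: Sx.1 | case: (Sy.1 j) ..].
Qed.

Lemma genS_lower L x j t : genS L x -> 0 <= t -> t < crd x j -> ~ inS L (setc x j t).
Proof.
move=> [_ minx] t0 lt_t S_t.
have := congr1 (fun z => crd z j) (minx _ S_t (ple_setc (ltW lt_t))).
by rewrite crd_setc_eq => E; move: lt_t; rewrite E ltxx.
Qed.

(* Each positive coordinate of a generator is the same-axis coordinate of a
   point of L: otherwise it could be lowered to the next smaller one. *)
Lemma genS_coord L x j : genS L x -> 0 < crd x j ->
  exists2 q, q \in L & crd q j = crd x j.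
Proof.
move=> gx x_pos.
have [/hasP[q Lq /eqP E] | /hasPn none] := boolP (has (fun q => crd q j == crd x j) L).
  by exists q.
exfalso; set t := max_of L (fun q => crd q j < crd x j) (fun q => crd q j).
have t0 : 0 <= t by exact: max_of_ge0.
have lt_t : t < crd x j.
  have [E | [q _ [lt_q E]]] :=
    max_of_attained L (fun q => crd q j < crd x j) (fun q => crd q j);
    by rewrite /t E.
apply: (genS_lower gx t0 lt_t); split.
  by apply: box_setc => //; [exact: gx.1.1 | apply: lt_trans (gx.1.1 j).2].
move=> q Lq lt_q; have := lt_q j; rewrite crd_setc_eq => lt_tq.
case: (ltgtP (crd q j) (crd x j)) => [qx | xq | qx].
- have := @max_of_ub _ L (fun q => crd q j < crd x j) (fun q => crd q j) q Lq qx.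
  by rewrite -/t leNgt lt_tq.
- apply: (gx.1.2 q Lq) => k; case: (eqVneq k j) => [-> // | nkj].
  by have := lt_q k; rewrite crd_setc_ne.
- by have := none q Lq; rewrite qx eqxx.
Qed.

Lemma inS_cons p L x : inS (p :: L) x <-> ~ slt x p /\ inS L x.
Proof.
split=> [[Bx Sx] | [nxp [Bx Sx]]].
  by split; [apply: Sx; rewrite mem_head | split=> // q Lq; apply: Sx; rewrite inE Lq orbT].
by split=> // q; rewrite inE => /predU1P[-> | /Sx].
Qed.

End Region.

Section Sweep.
Variables (R : realFieldType) (p : pt R) (L : seq (pt R)).
Implicit Types (x y g q w : pt R).

Hypothesis p_box : forall j, 0 < crd p j < 1.
Hypothesis p_low : forall q, q \in L -> crd p i2 < crd q i2.
Hypothesis p_inc : forall q, q \in L -> ~ ple p q.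
Hypothesis p_new : forall q j, q \in L -> crd q j != crd p j.

Lemma p_boxW : box p.
Proof. by move=> j; have /andP[p0 p1] := p_box j; split; [exact: ltW |]. Qed.

Lemma inS_setz w t : crd w i2 <= crd p i2 -> 0 <= t <= crd p i2 ->
  inS L w -> inS L (setc w i2 t).
Proof.
move=> wz /andP[t0 tp] [Bw Sw]; have /andP[_ pz1] := p_box i2.
split; first by apply: box_setc => //; exact: le_lt_trans tp pz1.
move=> q Lq lt_q; apply: (Sw q Lq) => j; case: (eqVneq j i2) => [-> | nj].
  exact: le_lt_trans wz (p_low Lq).
by have := lt_q j; rewrite crd_setc_ne.
Qed.

Lemma new_coord_not_genS x j : crd x j = crd p j -> ~ genS L x.
Proof.
move=> xj gx; have /andP[pj0 _] := p_box j.
have [|q Lq qj] := genS_coord (j := j) gx; first by rewrite xj.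
by move: (p_new j Lq); rewrite qj xj eqxx.
Qed.

Lemma genS_below_z0 g : genS L g -> crd g i2 < crd p i2 -> crd g i2 = 0.
Proof.
move=> gg gz; have [g0 _] := gg.1.1 i2.
move: g0; rewrite le_eqVlt => /orP[/eqP <- // | g0]; exfalso.
apply: (genS_lower gg (lexx 0) g0); apply: inS_setz gg.1 => //.
  exact: ltW.
by rewrite lexx; case/andP: (p_box i2) => /ltW.
Qed.

Definition lift g := setc g i2 (crd p i2).

Lemma inS_lift w : crd w i2 = 0 -> inS (p :: L) (lift w) <-> inS L w.
Proof.
have /andP[pz0 _] := p_box i2.
move=> w0; have lowered : setc (lift w) i2 0 = w by rewrite setc_setc -w0 setcK.
split=> [/inS_cons[_ Sw] | Sw].
  by rewrite -lowered; apply: inS_setz Sw; rewrite ?crd_setc_eq ?lexx ?ltW.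
apply/inS_cons; split; first by move/(_ i2); rewrite crd_setc_eq ltxx.
by apply: inS_setz; rewrite ?w0 ?lexx ?ltW.
Qed.

Lemma lift_genS g : crd g i2 = 0 -> crd g i0 < crd p i0 -> crd g i1 < crd p i1 ->
  genS L g <-> genS (p :: L) (lift g).
Proof.
move=> g0 g_p0 g_p1.
have lift_lower j t : j != i2 -> setc (lift g) j t = lift (setc g j t).
  by move=> nj; rewrite /lift setcC // eq_sym.
split=> gg; apply: genS_intro => [|j t t0].
- exact: (inS_lift g0).2 gg.1.
- case: (eqVneq j i2) => [-> | nj].
    rewrite crd_setc_eq => tp /inS_cons[lt_p _]; apply: lt_p.
    by apply/(@slt_axes _ i0 i1) => //; rewrite crd_setc_eq !crd_setc_ne.
  rewrite crd_setc_ne // lift_lower // => tg /inS_lift S_t.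
  by apply: (genS_lower gg t0 tg); apply: S_t; rewrite crd_setc_ne // eq_sym.
- exact: (inS_lift g0).1 gg.1.
- case: (eqVneq j i2) => [-> | nj]; first by rewrite g0 ltNge t0.
  move=> tg S_t; apply: (genS_lower gg t0 (t := t) (j := j)); first by rewrite crd_setc_ne.
  by rewrite lift_lower //; apply/inS_lift => //; rewrite crd_setc_ne // eq_sym.
Qed.

Lemma keep_genS x : genS L x -> ~ slt x p -> genS (p :: L) x.
Proof.
move=> [Sx minx] nxp; split; first exact/inS_cons.
by move=> y /inS_cons[_ Sy]; apply: minx.
Qed.

Lemma lift_of_genS g : genS L g -> slt g p -> genS (p :: L) (lift g).
Proof.
move=> gg lt_gp; apply/lift_genS => //; [exact: genS_below_z0 | exact: lt_gp ..].
Qed.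

Lemma genS_cons_snap x j t : genS (p :: L) x -> 0 <= t <= crd p j ->
  crd p j <= crd x j -> inS L (setc x j t) -> crd x j = crd p j.
Proof.
move=> gx /andP[t0 tp] p_x S_t; apply/eqP; rewrite eq_le p_x andbT leNgt.
apply/negP => p_lt; have /andP[pj0 pj1] := p_box j.
apply: (genS_lower gx (ltW pj0) p_lt); apply/inS_cons; split.
  by move/(_ j); rewrite crd_setc_eq ltxx.
apply: (inS_up S_t); last by apply: box_setc (gx.1.1) (ltW pj0) pj1.
by move=> k; rewrite !crd_setc; case: eqP.
Qed.

Lemma lift_unique x t : genS (p :: L) x -> 0 <= t -> t < crd x i2 ->
  inS L (setc x i2 t) -> slt (setc x i2 t) p ->
  exists g, [/\ genS L g, slt g p & x = lift g].
Proof.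
move=> gx t0 tx S_t lt_tp; have /inS_cons[nxp _] := gx.1.
have p_x := slt_setc_coord lt_tp nxp.
have x_eq : crd x i2 = crd p i2.
  apply: genS_cons_snap S_t => //; rewrite t0 /=.
  by have := lt_tp i2; rewrite crd_setc_eq => /ltW.
have x_p j : j != i2 -> crd x j < crd p j by move=> nj; have := lt_tp j; rewrite crd_setc_ne.
exists (setc x i2 0); split.
- apply/lift_genS; rewrite ?crd_setc_eq ?crd_setc_ne ?x_p //.
  by rewrite /lift setc_setc -x_eq setcK.
- apply/(@slt_axes _ i0 i1); rewrite ?crd_setc_eq ?crd_setc_ne ?x_p //.
  by case/andP: (p_box i2).
- by rewrite /lift setc_setc -x_eq setcK.
Qed.

Section Corner.
Variables u v : 'I_3.
Hypotheses (nuv : u != v) (nu : u != i2) (nv : v != i2).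
Let nvu : v != u. Proof. by rewrite eq_sym. Qed.
Let nzu : i2 != u. Proof. by rewrite eq_sym. Qed.
Let nzv : i2 != v. Proof. by rewrite eq_sym. Qed.

Definition corner_height : R :=
  max_of L (fun q => crd p u < crd q u) (fun q => crd q v).

Definition corner := setc (setc p v corner_height) i2 0.

Lemma corner_u : crd corner u = crd p u.
Proof. by rewrite !crd_setc_ne. Qed.

Lemma corner_v : crd corner v = corner_height.
Proof. by rewrite crd_setc_ne // crd_setc_eq. Qed.

Lemma corner_z : crd corner i2 = 0.
Proof. exact: crd_setc_eq. Qed.

Lemma corner_height_ub q : q \in L -> crd p u < crd q u -> crd q v <= corner_height.
Proof. exact: max_of_ub. Qed.

Lemma corner_height_attained : corner_height = 0 \/
  exists2 q, q \in L & crd p u < crd q u /\ corner_height = crd q v.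
Proof. exact: max_of_attained. Qed.

(* By incomparability, points of L beyond p on axis u are below it on v. *)
Lemma corner_height_lt : corner_height < crd p v.
Proof.
have /andP[pv0 _] := p_box v.
case: corner_height_attained => [-> // | [q Lq [pq_u ->]]].
rewrite ltNge le_eqVlt eq_sym (negbTE (p_new v Lq)) /=; apply/negP => pq_v.
apply: (p_inc Lq) => k; apply: ltW; move: k; apply/(@slt_axes _ u v) => //.
by split=> //; apply: p_low.
Qed.

Lemma corner_box : box corner.
Proof.
have /andP[_ pv1] := p_box v.
apply: box_setc; rewrite ?lexx ?ltr01 //; apply: box_setc p_boxW _ _.
  exact: max_of_ge0.
exact: lt_trans corner_height_lt pv1.
Qed.

Lemma above_corner_inS w : crd w u = crd p u -> corner_height <= crd w v ->
  box w -> inS (p :: L) w.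
Proof.
move=> wu hw Bw; apply/inS_cons; split; first by move/(_ u); rewrite wu ltxx.
split=> // q Lq /(slt_axes _ _ nuv nu nv)[wq_u wq_v _].
rewrite wu in wq_u; have := le_trans (corner_height_ub Lq wq_u) hw.
by rewrite leNgt wq_v.
Qed.

Lemma corner_genS : genS (p :: L) corner.
Proof.
have /andP[pz0 _] := p_box i2.
apply: genS_intro => [|j t t0].
  by apply: above_corner_inS; rewrite ?corner_u ?corner_v //; exact: corner_box.
case: (axes_cover j nuv nu nv) => [-> | [-> | ->]].
- rewrite corner_u => tp /inS_cons[lt_p _]; apply: lt_p.
  apply/(slt_axes _ _ nuv nu nv).
  rewrite crd_setc_eq crd_setc_ne // corner_v crd_setc_ne // corner_z.
  by split=> //; exact: corner_height_lt.
- rewrite corner_v => th; case: corner_height_attained => [E | [q Lq [pq_u E]]].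
    by move: th; rewrite E ltNge t0.
  move=> /inS_cons[_ [_ Sq]]; apply: (Sq q Lq).
  apply/(slt_axes _ _ nuv nu nv).
  rewrite crd_setc_eq crd_setc_ne // corner_u crd_setc_ne // corner_z.
  by split; rewrite -?E //; exact: lt_trans pz0 (p_low Lq).
- by rewrite corner_z ltNge t0.
Qed.

Lemma corner_not_genS : ~ genS L corner.
Proof. exact/new_coord_not_genS/corner_u. Qed.

Lemma corner_unique x t : genS (p :: L) x -> 0 <= t -> t < crd x u ->
  inS L (setc x u t) -> slt (setc x u t) p -> x = corner.
Proof.
move=> gx t0 tx S_t lt_tp; have /inS_cons[nxp Sx] := gx.1.
have /andP[pz0 _] := p_box i2; have h0 : 0 <= corner_height by exact: max_of_ge0.
have p_xu := slt_setc_coord lt_tp nxp.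
have x_pz : crd x i2 < crd p i2 by have := lt_tp i2; rewrite crd_setc_ne.
have x_z : crd x i2 = 0.
  have [x0 _] := Sx.1 i2; move: x0; rewrite le_eqVlt => /orP[/eqP <- // | x0].
  exfalso; apply: (genS_lower gx (lexx 0) x0); apply/inS_cons; split.
    by move/(_ u); rewrite crd_setc_ne // ltNge p_xu.
  by apply: inS_setz Sx; rewrite ?lexx ?ltW.
have x_u : crd x u = crd p u.
  apply: genS_cons_snap S_t => //; rewrite t0 /=.
  by have := lt_tp u; rewrite crd_setc_eq => /ltW.
have h_x : corner_height <= crd x v.
  rewrite leNgt; apply/negP => x_h.
  case: corner_height_attained => [E | [q Lq [pq_u E]]].
    by move: x_h; rewrite E ltNge (Sx.1 v).1.
  apply: (Sx.2 q Lq); apply/(slt_axes _ _ nuv nu nv); rewrite x_u x_z -E.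
  by split=> //; exact: lt_trans pz0 (p_low Lq).
have x_h : crd x v <= corner_height.
  rewrite leNgt; apply/negP => h_lt.
  apply: (genS_lower gx h0 h_lt); apply: above_corner_inS.
  - by rewrite crd_setc_ne.
  - by rewrite crd_setc_eq.
  - by apply: box_setc Sx.1 h0 _; exact: lt_trans h_lt (Sx.1 v).2.
apply: pt_eq => k; case: (axes_cover k nuv nu nv) => [-> | [-> | ->]].
- by rewrite x_u corner_u.
- by rewrite corner_v; apply/eqP; rewrite eq_le x_h h_x.
- by rewrite x_z corner_z.
Qed.

End Corner.

Lemma genS_cons x : genS (p :: L) x <->
  [\/ genS L x /\ ~ slt x p, exists g, [/\ genS L g, slt g p & x = lift g],
      x = corner i0 i1 | x = corner i1 i0].
Proof.
split=> [gx | [[gLx nxp] | [g [gg lt_gp ->]] | -> | ->]]; last first.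
- exact: corner_genS.
- exact: corner_genS.
- exact: lift_of_genS.
- exact: keep_genS.
have /inS_cons[nxp Sx] := gx.1.
case: (classic (genS L x)) => [gLx | ngLx]; first by constructor 1.
have [j [t [t0 tx S_t]]] : exists j t, [/\ 0 <= t, t < crd x j & inS L (setc x j t)].
  apply: NNPP => none; apply: ngLx; apply: genS_intro => // j t t0 tx S_t.
  by apply: none; exists j, t.
have lt_tp : slt (setc x j t) p.
  by apply: NNPP => nlt; apply: (genS_lower gx t0 tx); exact/inS_cons.
case: (ord3_cases j) => [ej | [ej | ej]]; subst j.
- by constructor 3; exact: (corner_unique _ _ _ gx t0 tx S_t lt_tp).
- by constructor 4; exact: (corner_unique _ _ _ gx t0 tx S_t lt_tp).
- by constructor 2; exact: (lift_unique gx t0 tx S_t lt_tp).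
Qed.

Lemma corners_neq : corner i0 i1 != corner i1 i0.
Proof.
apply/eqP => /(congr1 (fun z => crd z i0)).
rewrite (@corner_u i0 i1) // (@corner_v i1 i0) // => E.
by have := @corner_height_lt i1 i0 isT isT isT; rewrite -E ltxx.
Qed.

Lemma lift_not_corner g u v : u != v -> u != i2 -> v != i2 -> lift g != corner u v.
Proof.
move=> nuv nu nv; apply/eqP => /(congr1 (fun z => crd z i2)).
rewrite crd_setc_eq corner_z // => E.
by have := p_box i2; rewrite E ltxx.
Qed.

Lemma genS_cons_enum sG : uniq sG -> (forall x, x \in sG <-> genS L x) ->
  exists s, [/\ uniq s, (forall x, x \in s <-> genS (p :: L) x) & size s = (size sG).+2].
Proof.
move=> uG memG; set below := [seq g <- sG | sltb g p].
have mem_below g : g \in below -> genS L g /\ slt g p.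
  by rewrite mem_filter => /andP[/sltbP lt_gp /memG].
exists ([seq g <- sG | ~~ sltb g p] ++ [seq lift g | g <- below] ++
        [:: corner i0 i1; corner i1 i0]); split.
- rewrite cat_uniq filter_uniq //= cat_uniq /= !inE corners_neq !andbT.
  apply/and3P; split; last (rewrite orbF negb_or; apply/andP; split).
  + apply/hasPn => x; rewrite mem_filter; apply: contraTN => /andP[_ /memG].
    rewrite !mem_cat !inE => gLx; apply/negP.
    case/or3P=> [/mapP[g _ E] | /eqP E | /eqP E]; move: gLx; rewrite E.
    * by apply: (new_coord_not_genS (j := i2)); rewrite crd_setc_eq.
    * exact: corner_not_genS.
    * exact: corner_not_genS.
  + rewrite map_inj_in_uniq ?filter_uniq // => g h /mem_below[gg lt_gp] /mem_below[gh lt_hp].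
    have g0 := genS_below_z0 gg (lt_gp i2); have h0 := genS_below_z0 gh (lt_hp i2).
    by move/setc_inj; apply; rewrite g0 h0.
  + by apply/mapP => -[g _ /eqP]; apply/negP; rewrite eq_sym lift_not_corner.
  + by apply/mapP => -[g _ /eqP]; apply/negP; rewrite eq_sym lift_not_corner.
- move=> x; rewrite genS_cons !mem_cat !inE mem_filter; split.
    case/or4P=> [/andP[/sltbP nxp /memG gx] | /mapP[g /mem_below[gg lt_gp] ->]
               | /eqP-> | /eqP->].
    + by constructor 1.
    + by constructor 2; exists g.
    + by constructor 3.
    + by constructor 4.
  case=> [[/memG Gx nxp] | [g [gg lt_gp ->]] | -> | ->].
  + by rewrite Gx andbT; apply/orP; left; apply/sltbP.
  + by rewrite map_f ?orbT // mem_filter (memG g).2 // andbT; apply/sltbP.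
  + by rewrite eqxx !orbT.
  + by rewrite eqxx !orbT.
- by rewrite !size_cat size_map !size_filter /= addnCA addnA count_predC addn2.
Qed.

End Sweep.

Section Count.
Variable R : realFieldType.
Implicit Types (x y q : pt R) (L : seq (pt R)).

Definition zle : rel (pt R) := fun a b => crd a i2 <= crd b i2.

Definition general_position L := [/\ uniq L,
  forall q j, q \in L -> 0 < crd q j < 1,
  forall q q', q \in L -> q' \in L -> q != q' -> ~ ple q q' &
  forall q q' j, q \in L -> q' \in L -> q != q' -> crd q j != crd q' j].

Lemma general_position_cons p L : general_position (p :: L) -> general_position L.
Proof.
have sub q : q \in L -> q \in p :: L by rewrite inE orbC => ->.
case=> /andP[_ uL] hbox hinc hdist.
by split=> // [q j /sub | q q' /sub Lq /sub | q q' j /sub Lq /sub]; auto.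
Qed.

Lemma genS_nil x : genS [::] x <-> x = 0.
Proof.
have S0 : inS [::] (0 : pt R) by split=> // j; rewrite /crd mxE lexx ltr01.
have ple0 y : inS [::] y -> ple 0 y by move=> Sy j; rewrite /crd mxE; case: (Sy.1 j).
split=> [[Sx minx] | ->]; first by apply: esym; apply: minx; [exact: S0 | exact: ple0].
split=> // y Sy le_y0; apply: pt_eq => j; apply/eqP.
by rewrite eq_le le_y0 (ple0 _ Sy).
Qed.

Lemma genS_count_sorted L : general_position L -> sorted zle L ->
  exists s, [/\ uniq s, (forall x, x \in s <-> genS L x) & size s = (2 * size L + 1)%N].
Proof.
elim: L => [|p L IH] gp srt.
  by exists [:: 0]; split=> // x; rewrite inE genS_nil; split=> /eqP.
have [/andP[pL _] hbox hinc hdist] := gp; have pp := mem_head p L.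
have Lsub q : q \in L -> q \in p :: L by rewrite inE orbC => ->.
have neq q : q \in L -> p != q by move=> Lq; apply: contraNneq pL => ->.
have [sG [uG memG szG]] := IH (general_position_cons gp) (path_sorted srt).
have p_low q : q \in L -> crd p i2 < crd q i2.
  move=> Lq; rewrite lt_neqAle (hdist _ _ _ pp (Lsub _ Lq) (neq _ Lq)) /=.
  by move/allP: (order_path_min (fun _ _ _ => @le_trans _ _ _ _ _) srt); apply.
have p_new q j : q \in L -> crd q j != crd p j.
  by move=> Lq; rewrite eq_sym; apply: hdist pp (Lsub _ Lq) (neq _ Lq).
have [s [us mems szs]] := genS_cons_enum (fun j => hbox p j pp) p_low
  (fun q Lq => hinc _ _ pp (Lsub _ Lq) (neq _ Lq))
  p_new uG memG.
by exists s; split=> //; rewrite szs szG /=; lia.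
Qed.

End Count.

Lemma genS_generator (R : realFieldType) rho (r : 'I_rho -> pt R) L x :
  (forall q, q \in L <-> exists i, q = r i) -> genS L x <-> generator r x.
Proof.
move=> memL; have S_eq y : inS L y <-> in_region r y.
  split=> -[By Sy]; split=> //.
    by move=> i; apply: Sy; apply/memL; exists i.
  by move=> q /memL[i ->]; exact: Sy.
by split=> -[/S_eq Sx minx]; split=> // y /S_eq; exact: minx.
Qed.

Lemma family_general_position (R : realFieldType) rho (r : 'I_rho -> pt R)
  (hbox : forall (i : 'I_rho) (j : 'I_3), 0 < crd (r i) j /\ crd (r i) j < 1)
  (hinc : forall i i' : 'I_rho, i != i' -> incomparable (r i) (r i'))
  (hdist : forall (i i' : 'I_rho) (j j' : 'I_3),
      crd (r i) j = crd (r i') j' -> i = i' /\ j = j') :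
  let L := sort (@zle R) (map r (enum 'I_rho)) in
  (forall q, q \in L <-> exists i, q = r i) /\ general_position L.
Proof.
move=> L; have memL q : q \in L <-> exists i, q = r i.
  rewrite mem_sort; split=> [/mapP[i _ ->] | [i ->]]; first by exists i.
  by rewrite map_f ?mem_enum.
have ne_idx i i' : r i != r i' -> i != i' by apply: contraNneq => ->.
split=> //; split.
- rewrite sort_uniq map_inj_uniq ?enum_uniq // => i i' /(congr1 (fun x => crd x i0)).
  by case/hdist.
- by move=> q j /memL[i ->]; have [-> ->] := hbox i j.
- by move=> q q' /memL[i ->] /memL[i' ->] /ne_idx /hinc[].
- move=> q q' j /memL[i ->] /memL[i' ->] /ne_idx ne; apply/eqP => /hdist[ei _].
  by rewrite ei eqxx in ne.
Qed.

Theorem corollaryC (R : realFieldType) (rho : nat) (r : 'I_rho -> pt R)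
  (hbox : forall (i : 'I_rho) (j : 'I_3), 0 < crd (r i) j /\ crd (r i) j < 1)
  (hinc : forall i i' : 'I_rho, i != i' -> incomparable (r i) (r i'))
  (hdist : forall (i i' : 'I_rho) (j j' : 'I_3),
      crd (r i) j = crd (r i') j' -> i = i' /\ j = j') :
  exists s : seq (pt R),
    [/\ uniq s, (forall x : pt R, x \in s <-> generator r x)
      & size s = (2 * rho + 1)%N].
Proof.
have [memL gp] := family_general_position hbox hinc hdist.
have sorted_L := sort_sorted (fun a b : pt R => le_total (crd a i2) (crd b i2))
  (map r (enum 'I_rho)).
have [s [us mems szs]] := genS_count_sorted gp sorted_L.
exists s; split=> // [x | ]; first by rewrite mems; exact: genS_generator.
by rewrite szs size_sort size_map size_enum_ord.
Qed.
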